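(* Let $n,k$ be positive integers with $n\ge k$ and let $1\le i\le n-k$. Let $a_{n,k}^{(i)}$ be the coefficient of $z^i$ in $\mathrm{JS}_n^k(z)$. Then $a_{n,k}^{(i)}$ is the number of ordered pairs $(Q_1,Q_2)$ of simply hooked $k$-quasi-permutations of $[n]$ such that $$Q_1^-=Q_2^-,\qquad |Q_1^-|=|Q_2^-|=i,\qquad \mathrm{pr}_y(Q_1)=\mathrm{pr}_y(Q_2).$$
   Context: $\mathrm{JS}_n^k(z)$ is defined by $\mathrm{JS}_0^0(z)=1$, $\mathrm{JS}_n^k(z)=0$ if $k\notin\{1,\dots,n\}$ (for $(n,k)\neq(0,0)$), and $\mathrm{JS}_n^k(z)=\mathrm{JS}_{n-1}^{k-1}(z)+k(k+z)\mathrm{JS}_{n-1}^k(z)$ for $n,k\ge1$. Let $[n]=\{1,\dots,n\}$. A permutation $\sigma$ of $[n]$ is identified with its diagram $\mathcal D(\sigma)=\{(i,\sigma(i)):i\in[n]\}$. For $\alpha=(i,j)\in[n]\times[n]$ put $\mathrm{pr}_x(\alpha)=i$, $\mathrm{pr}_y(\alpha)=j$, and for $Q\subseteq[n]\times[n]$ put $\mathrm{pr}_x(Q)=\{\mathrm{pr}_x(\alpha):\alpha\in Q\}$, $\mathrm{pr}_y(Q)=\{\mathrm{pr}_y(\alpha):\alpha\in Q\}$, $Q^+=\{(i,j)\in Q:i\le j\}$, $Q^-=\{(i,j)\in Q:i\ge j\}$. A simply hooked $k$-quasi-permutation of $[n]$ is a subset $Q\subseteq[n]\times[n]$ such that (i)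 $Q\subseteq\mathcal D(\sigma)$ for some permutation $\sigma$ of $[n]$, and (ii) $|Q|=n-k$ and $\mathrm{pr}_x(Q^-)\cap\mathrm{pr}_y(Q^+)=\emptyset$. *)

From HB Require Import structures.
From mathcomp Require Import all_boot all_order all_algebra all_fingroup.
Set Implicit Arguments. Unset Strict Implicit. Unset Printing Implicit Defensive.
Import GRing.Theory.
Local Open Scope ring_scope.

Fixpoint JS (n k : nat) : {poly int} :=
  match n with
  | 0%N => if k == 0%N then 1 else 0
  | n'.+1 =>
      if (k == 0%N) || (n'.+1 < k)%N then 0
      else JS n' k.-1 + (k%:R * (k%:R%:P + 'X)) * JS n' k
  end.

(* [n] = {1..n} is modelled by 'I_n = {0..n-1} via i |-> i+1;
   all conditions below are invariant under this shift. *)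
Definition diagram (n : nat) (s : 'S_n) : {set 'I_n * 'I_n} :=
  [set (i, s i) | i : 'I_n].

Definition prx (n : nat) (Q : {set 'I_n * 'I_n}) : {set 'I_n} := [set a.1 | a in Q].
Definition pry (n : nat) (Q : {set 'I_n * 'I_n}) : {set 'I_n} := [set a.2 | a in Q].
Definition Qplus (n : nat) (Q : {set 'I_n * 'I_n}) : {set 'I_n * 'I_n} :=
  [set a in Q | (a.1 <= a.2)%N].
Definition Qminus (n : nat) (Q : {set 'I_n * 'I_n}) : {set 'I_n * 'I_n} :=
  [set a in Q | (a.2 <= a.1)%N].

Definition simply_hooked (n k : nat) (Q : {set 'I_n * 'I_n}) : bool :=
  [exists s : 'S_n, Q \subset diagram s]
  && (#|Q| == n - k)%N
  && (prx (Qminus Q) :&: pry (Qplus Q) == set0).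

From HB Require Import structures.
From mathcomp Require Import all_boot all_order all_algebra all_fingroup.
From mathcomp Require Import zify ring.

Set Implicit Arguments.
Unset Strict Implicit.
Unset Printing Implicit Defensive.

Import GRing.Theory.

(* Induct on n by looking at the largest point m of [m+1] in a pair (Q1, Q2).
   Since Q1 and Q2 share their descents Q^- and their column set pr_y, m plays
   the same role in both, and there are three cases:
   - m indexes a descent (m, y): y is one of the k values < m outside pr_y,
     and removing it lowers |Q^-| by one, which gives k * a(m, k, i - 1);
   - m is the value of ascents (x1, m) and (x2, m): each x_j is one of the k
     rows < m missing from pr_x(Q_j), which gives k^2 * a(m, k, i);
   - m is unused: a pair of (k-1)-quasi-permutations of [m], a(m, k - 1, i).
   This is the recurrence of the coefficients of
   JS_{m+1}^k = JS_m^{k-1} + k (k + z) JS_m^k. *)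

Lemma card_fibers_const (X Y : finType) (A : {set X}) (B : {set Y}) (f : X -> Y) c :
  {in A, forall x, f x \in B} ->
  {in B, forall y, #|[set x in A | f x == y]| = c} -> #|A| = c * #|B|.
Proof.
move=> fAB fib; rewrite -sum1_card (partition_big f (mem B)) //= mulnC -sum_nat_const.
apply: eq_bigr => y yB; rewrite -(fib y yB) -sum1_card.
by apply: eq_bigl => x; rewrite inE.
Qed.

Lemma eq_setU1 (T : finType) (a : T) (A B : {set T}) :
  a \notin A -> a \notin B -> (a |: A == a |: B) = (A == B).
Proof. by move=> aA aB; apply/eqP/eqP => [e|-> //]; rewrite -(setU1K aA) e setU1K. Qed.

Lemma setU1_inj (T : finType) (a b : T) (A : {set T}) : a \notin A -> a |: A = b |: A -> a = b.
Proof. by move=> aA e; move: (setU11 a A); rewrite e in_setU1 (negbTE aA) orbF => /eqP. Qed.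

Section QuasiPermutations.
Variable N : nat.
Implicit Types (Q R : {set 'I_N * 'I_N}) (a p q : 'I_N * 'I_N).

Definition partial_perm Q := [exists s : 'S_N, Q \subset diagram s].
Definition hooked Q := prx (Qminus Q) :&: pry (Qplus Q) == set0.
Definition boxed n Q := [forall a in Q, (a.1 < n) && (a.2 < n)].

(* A simply hooked [k]-quasi-permutation of [[n]], placed inside ['I_N] for a
   fixed [N >= n], so that [n] can vary in an induction. *)
Definition quasi_perm n k Q := [&& partial_perm Q, #|Q| + k == n, hooked Q & boxed n Q].

Definition hooked_pairs n k i :=
  [set PQ : {set 'I_N * 'I_N} * {set 'I_N * 'I_N} |
    [&& quasi_perm n k PQ.1, quasi_perm n k PQ.2, Qminus PQ.1 == Qminus PQ.2,
        #|Qminus PQ.1| == i & pry PQ.1 == pry PQ.2]].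

Definition below n := [set x : 'I_N | x < n].

Lemma quasi_perm_boxed n k Q : quasi_perm n k Q -> boxed n Q.
Proof. by case/and4P. Qed.

Lemma quasi_perm_simply_hooked k Q : k <= N -> quasi_perm N k Q = simply_hooked k Q.
Proof.
move=> kN; have bQ : boxed N Q by apply/forallP => a; rewrite !ltn_ord implybT.
have cQ : (#|Q| + k == N) = (#|Q| == N - k) by apply/eqP/eqP; lia.
by rewrite /quasi_perm /simply_hooked bQ cQ andbT andbA.
Qed.

Lemma mem_diagram (s : 'S_N) a : (a \in diagram s) = (a.2 == s a.1).
Proof.
apply/imsetP/eqP => [[x _ ->]|e] //; exists a.1 => //.
by case: a e => /= x y ->.
Qed.

Lemma partial_perm_fst_inj Q : partial_perm Q -> {in Q &, injective fst}.
Proof.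
case/existsP => s /subsetP sQ [x y] [x' y'] /sQ + /sQ.
by rewrite !mem_diagram /= => /eqP -> /eqP -> /= ->.
Qed.

Lemma partial_perm_snd_inj Q : partial_perm Q -> {in Q &, injective snd}.
Proof.
case/existsP => s /subsetP sQ [x y] [x' y'] /sQ + /sQ.
rewrite !mem_diagram /= => /eqP -> /eqP -> /perm_inj -> //.
Qed.

Lemma card_prx Q : partial_perm Q -> #|prx Q| = #|Q|.
Proof. by move/partial_perm_fst_inj/card_in_imset. Qed.

Lemma card_pry Q : partial_perm Q -> #|pry Q| = #|Q|.
Proof. by move/partial_perm_snd_inj/card_in_imset. Qed.

Lemma subset_partial_perm Q R : Q \subset R -> partial_perm R -> partial_perm Q.
Proof. by move=> sQR /existsP[s sR]; apply/existsP; exists s; apply: subset_trans sR. Qed.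

Lemma mem_prx Q x : (x \in prx Q) = [exists y, (x, y) \in Q].
Proof.
apply/imsetP/existsP => [[[x' y] aQ ->]|[y yQ]]; first by exists y.
by exists (x, y).
Qed.

Lemma mem_pry Q y : (y \in pry Q) = [exists x, (x, y) \in Q].
Proof.
apply/imsetP/existsP => [[[x y'] aQ ->]|[x xQ]]; first by exists x.
by exists (x, y).
Qed.

Lemma partial_perm_setU1 Q x y :
  partial_perm Q -> x \notin prx Q -> y \notin pry Q -> partial_perm ((x, y) |: Q).
Proof.
case/existsP => s /subsetP sQ xQ yQ; pose x' := (s^-1)%g y.
apply/existsP; exists (tperm x x' * s)%g; apply/subsetP => a.
rewrite in_setU1 mem_diagram permM => /orP[/eqP -> /=|aQ]; first by rewrite tpermL permKV.
have ax : x != a.1 by apply: contraNneq xQ => ->; apply: imset_f.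
have ax' : x' != a.1.
  apply: contraNneq yQ => e; apply/imsetP; exists a => //.
  by move/sQ: aQ; rewrite mem_diagram -e permKV => /eqP.
by rewrite tpermD // -mem_diagram sQ.
Qed.

Lemma Qminus_subset Q : Qminus Q \subset Q.
Proof. by apply/subsetP => a; rewrite inE => /andP[]. Qed.

Lemma Qplus_subset Q : Qplus Q \subset Q.
Proof. by apply/subsetP => a; rewrite inE => /andP[]. Qed.

Lemma Qminus_setU1 p Q :
  Qminus (p |: Q) = if p.2 <= p.1 then p |: Qminus Q else Qminus Q.
Proof.
apply/setP => a; case: ifP => h; rewrite !inE; case: eqP => [->|] //=; by rewrite ?h ?andbF.
Qed.

Lemma Qplus_setU1 p Q :
  Qplus (p |: Q) = if p.1 <= p.2 then p |: Qplus Q else Qplus Q.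
Proof.
apply/setP => a; case: ifP => h; rewrite !inE; case: eqP => [->|] //=; by rewrite ?h ?andbF.
Qed.

Lemma prx_setU1 p Q : prx (p |: Q) = p.1 |: prx Q.
Proof. exact: imsetU1. Qed.

Lemma pry_setU1 p Q : pry (p |: Q) = p.2 |: pry Q.
Proof. exact: imsetU1. Qed.

Lemma hooked_subset Q R : Q \subset R -> hooked R -> hooked Q.
Proof.
move=> sQR; rewrite /hooked -!subset0; apply: subset_trans.
by apply: setISS; apply: imsetS; apply/subsetP => a; rewrite !inE => /andP[/(subsetP sQR) -> ->].
Qed.

Lemma hooked_neq Q p q :
  hooked Q -> p \in Q -> q \in Q -> p.2 <= p.1 -> q.1 <= q.2 -> p.1 != q.2.
Proof.
move=> /eqP hQ pQ qQ hp hq; apply/eqP => e.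
have : p.1 \in prx (Qminus Q) :&: pry (Qplus Q).
  by rewrite inE; apply/andP; split; [|rewrite e]; apply: imset_f; rewrite inE ?pQ ?qQ.
by rewrite hQ inE.
Qed.

Lemma hooked_offdiag Q a : hooked Q -> a \in Q -> a.1 != a.2.
Proof.
move=> hQ aQ; apply/negP => /eqP e.
by have := hooked_neq hQ aQ aQ; rewrite e leqnn eqxx => /(_ isT isT).
Qed.

Lemma boxedP n Q a : boxed n Q -> a \in Q -> (a.1 < n) && (a.2 < n).
Proof. by move=> /forallP/(_ a)/implyP. Qed.

Lemma subset_boxed n Q R : Q \subset R -> boxed n R -> boxed n Q.
Proof.
by move=> /subsetP sQR bR; apply/forallP => a; apply/implyP => /sQR; apply: boxedP.
Qed.

Lemma boxed_leq n n' Q : n <= n' -> boxed n Q -> boxed n' Q.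
Proof.
move=> le bQ; apply/forallP => a; apply/implyP => /(boxedP bQ)/andP[h1 h2].
by apply/andP; split; apply: leq_trans le.
Qed.

Lemma boxed_setU1 n p Q : p.1 < n -> p.2 < n -> boxed n Q -> boxed n (p |: Q).
Proof.
move=> h1 h2 bQ; apply/forallP => a; rewrite in_setU1; apply/implyP.
by case/orP => [/eqP ->|/(boxedP bQ)]; rewrite ?h1 ?h2.
Qed.

Lemma card_below n : n <= N -> #|below n| = n.
Proof.
move=> le; have -> : below n = [set widen_ord le j | j : 'I_n].
  apply/setP => x; rewrite inE; apply/idP/imsetP => [lt|[j _ ->]] //=.
  by exists (Ordinal lt) => //; apply: val_inj.
rewrite card_imset ?card_ord // => a b /(congr1 val) /= e; exact: val_inj.
Qed.

Lemma prx_boxed n Q : boxed n Q -> prx Q \subset below n.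
Proof. by move=> bQ; apply/subsetP => _ /imsetP[a /(boxedP bQ)/andP[h _] ->]; rewrite inE. Qed.

Lemma pry_boxed n Q : boxed n Q -> pry Q \subset below n.
Proof. by move=> bQ; apply/subsetP => _ /imsetP[a /(boxedP bQ)/andP[_ h] ->]; rewrite inE. Qed.

Lemma boxed_card_leq n Q : n <= N -> partial_perm Q -> boxed n Q -> #|Q| <= n.
Proof.
move=> le pQ bQ; rewrite -card_prx // -(card_below le).
exact: subset_leq_card (prx_boxed bQ).
Qed.

Lemma card_below_prx n k Q : n <= N -> quasi_perm n k Q -> #|below n :\: prx Q| = k.
Proof.
move=> le /and4P[pQ /eqP cQ _ bQ].
by rewrite cardsD card_below // (setIidPr (prx_boxed bQ)) card_prx //; lia.
Qed.

Lemma card_below_pry n k Q : n <= N -> quasi_perm n k Q -> #|below n :\: pry Q| = k.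
Proof.
move=> le /and4P[pQ /eqP cQ _ bQ].
by rewrite cardsD card_below // (setIidPr (pry_boxed bQ)) card_pry //; lia.
Qed.

End QuasiPermutations.
Arguments below {N} n.
Arguments hooked_pairs {N} n k i.

Section TopElement.
Variables (N : nat) (m : 'I_N).
Implicit Types (Q R : {set 'I_N * 'I_N}) (a p : 'I_N * 'I_N) (x y : 'I_N).

Local Notation hooked_pairs := (@hooked_pairs N).

Fact leq_top : m <= N. Proof. exact: ltnW. Qed.

Definition strip Q := [set a in Q | (a.1 != m) && (a.2 != m)].

Lemma strip_subset Q : strip Q \subset Q.
Proof. by apply/subsetP => a; rewrite inE => /andP[]. Qed.

Lemma boxed_neq_top Q a : boxed m Q -> a \in Q -> (a.1 != m) && (a.2 != m).
Proof. by move=> bQ /(boxedP bQ)/andP[h1 h2]; rewrite -!val_eqE /= !ltn_eqF. Qed.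

Lemma top_notin_prx R : boxed m R -> m \notin prx R.
Proof. by move=> bR; apply/imsetP => -[a /(boxed_neq_top bR)/andP[+ _] e]; rewrite e eqxx. Qed.

Lemma top_notin_pry R : boxed m R -> m \notin pry R.
Proof. by move=> bR; apply/imsetP => -[a /(boxed_neq_top bR)/andP[_ +] e]; rewrite e eqxx. Qed.

Lemma top_row_notin R y : boxed m R -> (m, y) \notin R.
Proof. by move=> bR; apply/negP => /(boxed_neq_top bR); rewrite eqxx. Qed.

Lemma top_col_notin R x : boxed m R -> (x, m) \notin R.
Proof. by move=> bR; apply/negP => /(boxed_neq_top bR); rewrite eqxx andbF. Qed.

Lemma boxed_strip Q : boxed m.+1 Q -> boxed m (strip Q).
Proof.
move=> bQ; apply/forallP => a; apply/implyP; rewrite inE => /andP[/(boxedP bQ)/andP[h1 h2]].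
by rewrite -!val_eqE /= => /andP[e1 e2]; apply/andP; split; lia.
Qed.

Lemma strip_setU1 R p : boxed m R -> (p.1 == m) || (p.2 == m) -> strip (p |: R) = R.
Proof.
move=> bR hp; apply/setP => a; rewrite !inE.
case: eqVneq => [->|_]; last by case aR: (a \in R); rewrite ?(boxed_neq_top bR aR).
rewrite -negb_or hp andbF; apply/esym/negP => /(boxed_neq_top bR).
by rewrite -negb_or hp.
Qed.

Lemma strip_id Q : m \notin prx Q -> m \notin pry Q -> strip Q = Q.
Proof.
move=> hx hy; apply/setP => a; rewrite inE; case aQ: (a \in Q) => //=.
by apply/andP; split; [apply: contraNneq hx | apply: contraNneq hy] => <-; apply: imset_f.
Qed.

Lemma boxed_shrink Q : boxed m.+1 Q -> m \notin prx Q -> m \notin pry Q -> boxed m Q.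
Proof. by move=> bQ hx hy; rewrite -(strip_id hx hy); apply: boxed_strip. Qed.

Lemma prx_Qminus_top Q : boxed m.+1 Q -> (m \in prx (Qminus Q)) = (m \in prx Q).
Proof.
move=> bQ; rewrite !mem_prx; apply/existsP/existsP => -[y yQ]; exists y.
  by move: yQ; rewrite inE => /andP[].
by rewrite inE yQ /=; case/andP: (boxedP bQ yQ).
Qed.

Lemma Qminus_add_row R y : y < m -> Qminus ((m, y) |: R) = (m, y) |: Qminus R.
Proof. by move=> ym; rewrite Qminus_setU1 /= ltnW. Qed.

Lemma Qplus_add_row R y : y < m -> Qplus ((m, y) |: R) = Qplus R.
Proof. by move=> ym; rewrite Qplus_setU1 /= leqNgt ym. Qed.

Lemma Qminus_add_col R x : x < m -> Qminus ((x, m) |: R) = Qminus R.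
Proof. by move=> xm; rewrite Qminus_setU1 /= leqNgt xm. Qed.

Lemma Qplus_add_col R x : x < m -> Qplus ((x, m) |: R) = (x, m) |: Qplus R.
Proof. by move=> xm; rewrite Qplus_setU1 /= ltnW. Qed.

Lemma quasi_perm_strip Q k p :
  quasi_perm m.+1 k Q -> p \notin strip Q -> Q = p |: strip Q -> quasi_perm m k (strip Q).
Proof.
case/and4P => pQ cQ hQ bQ pQn eQ; apply/and4P; split.
- exact: subset_partial_perm (strip_subset Q) pQ.
- by move: cQ; rewrite {1}eQ cardsU1 pQn add1n addSn eqSS.
- exact: hooked_subset (strip_subset Q) hQ.
- exact: boxed_strip.
Qed.

Lemma quasi_perm_add_row R k y :
  quasi_perm m k R -> y \in below m :\: pry R -> quasi_perm m.+1 k ((m, y) |: R).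
Proof.
case/and4P => pR cR hR bR; rewrite !inE => /andP[yR ym].
apply/and4P; split.
- by apply: partial_perm_setU1; rewrite ?top_notin_prx.
- by rewrite cardsU1 top_row_notin // add1n addSn eqSS.
- rewrite /hooked Qminus_add_row // Qplus_add_row // prx_setU1; apply/eqP/setP => z.
  have bR' := subset_boxed (Qplus_subset R) bR.
  rewrite !inE; case: eqP => [->|_] /=; first by rewrite (negbTE (top_notin_pry bR')).
  by move/eqP/setP: hR => /(_ z); rewrite !inE.
- by apply: boxed_setU1; rewrite /= ?ltnS ?(ltnW ym) // (boxed_leq (leqnSn m) bR).
Qed.

Lemma quasi_perm_add_col R k x :
  quasi_perm m k R -> x \in below m :\: prx R -> quasi_perm m.+1 k ((x, m) |: R).
Proof.
case/and4P => pR cR hR bR; rewrite !inE => /andP[xR xm].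
apply/and4P; split.
- by apply: partial_perm_setU1; rewrite ?top_notin_pry.
- by rewrite cardsU1 top_col_notin // add1n addSn eqSS.
- rewrite /hooked Qminus_add_col // Qplus_add_col // pry_setU1; apply/eqP/setP => z.
  have bR' := subset_boxed (Qminus_subset R) bR.
  rewrite !inE; case: eqP => [->|_] /=; first by rewrite (negbTE (top_notin_prx bR')).
  by move/eqP/setP: hR => /(_ z); rewrite !inE.
- by apply: boxed_setU1; rewrite /= ?ltnS ?(ltnW xm) // (boxed_leq (leqnSn m) bR).
Qed.

(* Besides [(m, y)], row [m] is empty by injectivity and column [m] is empty
   because [m] already indexes a row of [Qminus Q]. *)
Lemma remove_row Q k y : quasi_perm m.+1 k Q -> (m, y) \in Q ->
  [/\ y \in below m :\: pry (strip Q), Q = (m, y) |: strip Q & quasi_perm m k (strip Q)].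
Proof.
move=> qQ yQ; have /and4P[pQ _ hQ bQ] := qQ.
have ym : y < m.
  have := hooked_offdiag hQ yQ; case/andP: (boxedP bQ yQ) => _.
  by rewrite eq_sym -val_eqE /=; lia.
have eQ : Q = (m, y) |: strip Q.
  apply/setP => a; rewrite in_setU1 inE; case: (eqVneq a (m, y)) => [->|ne] //=.
  case aQ: (a \in Q) => //=; apply/esym/andP; split.
    by apply: contra_neq ne => e; apply: (partial_perm_fst_inj pQ).
  apply/eqP => e; have : a.1 <= a.2 by rewrite e; case/andP: (boxedP bQ aQ).
  by move/(hooked_neq hQ yQ aQ (ltnW ym)); rewrite e eqxx.
split => //.
- rewrite !inE ym andbT; apply/imsetP => -[a]; rewrite inE => /andP[aQ /andP[a1 _]] e.
  by move: a1; rewrite (partial_perm_snd_inj pQ aQ yQ (esym e)) eqxx.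
- by apply: (quasi_perm_strip qQ _ eQ); rewrite inE /= eqxx andbF.
Qed.

Lemma remove_col Q k x : quasi_perm m.+1 k Q -> m \notin prx Q -> (x, m) \in Q ->
  [/\ x \in below m :\: prx (strip Q), Q = (x, m) |: strip Q & quasi_perm m k (strip Q)].
Proof.
move=> qQ mQ xQ; have /and4P[pQ _ hQ bQ] := qQ.
have xm : x < m.
  have := hooked_offdiag hQ xQ; case/andP: (boxedP bQ xQ) => + _.
  by rewrite -val_eqE /=; lia.
have eQ : Q = (x, m) |: strip Q.
  apply/setP => a; rewrite in_setU1 inE; case: (eqVneq a (x, m)) => [->|ne] //=.
  case aQ: (a \in Q) => //=; apply/esym/andP; split.
    by apply: contraNneq mQ => <-; apply: imset_f.
  by apply: contra_neq ne => e; apply: (partial_perm_snd_inj pQ).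
split => //.
- rewrite !inE xm andbT; apply/imsetP => -[a]; rewrite inE => /andP[aQ /andP[_ a2]] e.
  by move: a2; rewrite (partial_perm_fst_inj pQ aQ xQ (esym e)) eqxx.
- by apply: (quasi_perm_strip qQ _ eQ); rewrite inE /= eqxx !andbF.
Qed.

Lemma quasi_perm_S Q k : m \notin prx Q -> m \notin pry Q ->
  quasi_perm m.+1 k.+1 Q = quasi_perm m k Q.
Proof.
move=> hx hy; rewrite /quasi_perm addnS eqSS; congr [&& _, _, _ & _].
by apply/idP/idP => bQ; [exact: boxed_shrink bQ hx hy | exact: boxed_leq (leqnSn m) bQ].
Qed.

Lemma mem_hooked_pairs_add_row k i R1 R2 y :
  quasi_perm m k R1 -> quasi_perm m k R2 ->
  y \in below m :\: pry R1 -> y \in below m :\: pry R2 ->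
  (((m, y) |: R1, (m, y) |: R2) \in hooked_pairs m.+1 k i.+1) =
  ((R1, R2) \in hooked_pairs m k i).
Proof.
move=> q1 q2 y1 y2; move: (y1) (y2); rewrite !inE => /andP[ny1 ym] /andP[ny2 _].
have [b1 b2] := (quasi_perm_boxed q1, quasi_perm_boxed q2).
have [n1 n2] := (subset_boxed (Qminus_subset R1) b1, subset_boxed (Qminus_subset R2) b2).
rewrite /= !quasi_perm_add_row // !Qminus_add_row // !pry_setU1 /=.
by rewrite q1 q2 !eq_setU1 ?top_row_notin // cardsU1 top_row_notin.
Qed.

Lemma mem_hooked_pairs_add_col k i R1 R2 x1 x2 :
  quasi_perm m k R1 -> quasi_perm m k R2 ->
  x1 \in below m :\: prx R1 -> x2 \in below m :\: prx R2 ->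
  (((x1, m) |: R1, (x2, m) |: R2) \in hooked_pairs m.+1 k i) =
  ((R1, R2) \in hooked_pairs m k i).
Proof.
move=> q1 q2 X1 X2; move: (X1) (X2); rewrite !inE => /andP[_ x1m] /andP[_ x2m].
have [b1 b2] := (quasi_perm_boxed q1, quasi_perm_boxed q2).
rewrite /= !quasi_perm_add_col // !Qminus_add_col // !pry_setU1 /=.
by rewrite q1 q2 eq_setU1 ?top_notin_pry.
Qed.

Local Notation pair_set := ({set 'I_N * 'I_N} * {set 'I_N * 'I_N})%type.

Definition strip2 (PQ : pair_set) := (strip PQ.1, strip PQ.2).
Definition top_row_pairs := [set PQ : pair_set | m \in prx PQ.1].
Definition top_col_pairs := [set PQ : pair_set | m \in pry PQ.1].

Lemma mem_top_row_pairs PQ : (PQ \in top_row_pairs) = (m \in prx PQ.1).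
Proof. by rewrite inE. Qed.

Lemma mem_top_col_pairs PQ : (PQ \in top_col_pairs) = (m \in pry PQ.1).
Proof. by rewrite inE. Qed.

Lemma hooked_pairs_prx_top k i Q1 Q2 :
  (Q1, Q2) \in hooked_pairs m.+1 k i -> (m \in prx Q2) = (m \in prx Q1).
Proof.
rewrite inE /= => /and5P[/quasi_perm_boxed b1 /quasi_perm_boxed b2 /eqP em _ _].
by rewrite -(prx_Qminus_top b1) -(prx_Qminus_top b2) em.
Qed.

Lemma strip_hooked_pairs_row k i Q1 Q2 :
  (Q1, Q2) \in hooked_pairs m.+1 k i.+1 -> m \in prx Q1 ->
  exists y, [/\ y \in below m :\: pry (strip Q1), Q1 = (m, y) |: strip Q1,
    Q2 = (m, y) |: strip Q2 & strip2 (Q1, Q2) \in hooked_pairs m k i].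
Proof.
move=> HQ; have := HQ; rewrite inE /= => /and5P[q1 q2 /eqP em _ _].
rewrite mem_prx => /existsP[y yQ1].
have yQ2 : (m, y) \in Q2.
  have : (m, y) \in Qminus Q1.
    by rewrite inE yQ1 /=; case/andP: (boxedP (quasi_perm_boxed q1) yQ1).
  by rewrite em => /(subsetP (Qminus_subset Q2)).
have [Y1 E1 S1] := remove_row q1 yQ1; have [Y2 E2 S2] := remove_row q2 yQ2.
exists y; split => //.
by rewrite -(mem_hooked_pairs_add_row _ S1 S2 Y1 Y2) -E1 -E2.
Qed.

Lemma strip_hooked_pairs_col k i Q1 Q2 :
  (Q1, Q2) \in hooked_pairs m.+1 k i -> m \notin prx Q1 -> m \in pry Q1 ->
  exists x1 x2, [/\ x1 \in below m :\: prx (strip Q1), x2 \in below m :\: prx (strip Q2),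
    Q1 = (x1, m) |: strip Q1, Q2 = (x2, m) |: strip Q2 &
    strip2 (Q1, Q2) \in hooked_pairs m k i].
Proof.
move=> HQ mx1; have := HQ; rewrite inE /= => /and5P[q1 q2 /eqP em _ /eqP ey] my1.
have mx2 : m \notin prx Q2 by rewrite (hooked_pairs_prx_top HQ).
have /existsP[x1 x1Q] : [exists x, (x, m) \in Q1] by rewrite -mem_pry.
have /existsP[x2 x2Q] : [exists x, (x, m) \in Q2] by rewrite -mem_pry -ey.
have [X1 E1 S1] := remove_col q1 mx1 x1Q; have [X2 E2 S2] := remove_col q2 mx2 x2Q.
exists x1, x2; split => //.
by rewrite -(mem_hooked_pairs_add_col _ S1 S2 X1 X2) -E1 -E2.
Qed.

Lemma card_hooked_pairs_row k i :
  #|hooked_pairs m.+1 k i :&: top_row_pairs| =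
  if i is i'.+1 then k * #|hooked_pairs m k i'| else 0.
Proof.
case: i => [|i].
  apply/eqP; rewrite cards_eq0; apply/eqP/setP => -[Q1 Q2]; rewrite !inE /=.
  apply/negP => /andP[/and5P[q1 _ _ /eqP ci _]].
  rewrite -(prx_Qminus_top (quasi_perm_boxed q1)) => /imsetP[a].
  by move/eqP: ci; rewrite cards_eq0 => /eqP ->; rewrite in_set0.
apply: (card_fibers_const (f := strip2)).
  by move=> -[Q1 Q2] /setIP[HQ]; rewrite mem_top_row_pairs => /(strip_hooked_pairs_row HQ)[y [_ _ _]].
move=> -[R1 R2] HR; have := HR; rewrite inE /= => /and5P[q1 q2 _ _ /eqP ey].
have [b1 b2] := (quasi_perm_boxed q1, quasi_perm_boxed q2).
pose g y := ((m, y) |: R1, (m, y) |: R2).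
have -> : [set PQ in hooked_pairs m.+1 k i.+1 :&: top_row_pairs | strip2 PQ == (R1, R2)] =
    g @: (below m :\: pry R1).
  apply/setP => -[Q1 Q2]; rewrite inE in_setI mem_top_row_pairs -andbA.
  apply/and3P/imsetP.
    case=> HQ mQ /eqP[e1 e2]; have [y [Y1 E1 E2 _]] := strip_hooked_pairs_row HQ mQ.
    by exists y; rewrite -?e1 // /g -e1 -e2 -E1 -E2.
  case=> y Y1 [-> ->]; have Y2 : y \in below m :\: pry R2 by rewrite -ey.
  rewrite mem_hooked_pairs_add_row // HR prx_setU1 setU11 /strip2 /=.
  by rewrite !strip_setU1 ?eqxx.
rewrite card_in_imset ?(card_below_pry leq_top q1) //.
by move=> y1 y2 _ _ [/setU1_inj] => /(_ (top_row_notin y1 b1)) [].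
Qed.

Lemma card_hooked_pairs_col k i :
  #|(hooked_pairs m.+1 k i :\: top_row_pairs) :&: top_col_pairs| =
  k * k * #|hooked_pairs m k i|.
Proof.
apply: (card_fibers_const (f := strip2)).
  move=> -[Q1 Q2]; rewrite in_setI in_setD mem_top_row_pairs mem_top_col_pairs.
  move=> /andP[/andP[mx HQ] my].
  by have [x1 [x2 [_ _ _ _ ->]]] := strip_hooked_pairs_col HQ mx my.
move=> -[R1 R2] HR; have := HR; rewrite inE /= => /and5P[q1 q2 _ _ _].
have [b1 b2] := (quasi_perm_boxed q1, quasi_perm_boxed q2).
pose g (x : 'I_N * 'I_N) := ((x.1, m) |: R1, (x.2, m) |: R2).
have -> : [set PQ in (hooked_pairs m.+1 k i :\: top_row_pairs) :&: top_col_pairs |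
           strip2 PQ == (R1, R2)] =
    g @: setX (below m :\: prx R1) (below m :\: prx R2).
  apply/setP => -[Q1 Q2]; rewrite inE in_setI in_setD mem_top_row_pairs mem_top_col_pairs.
  rewrite -!andbA; apply/and4P/imsetP.
    case=> mx HQ my /eqP[e1 e2].
    have [x1 [x2 [X1 X2 E1 E2 _]]] := strip_hooked_pairs_col HQ mx my.
    exists (x1, x2); first by rewrite in_setX -e1 -e2 X1 X2.
    by rewrite /g /= -e1 -e2 -E1 -E2.
  case=> -[x1 x2]; rewrite inE /= => /andP[X1 X2] [-> ->].
  rewrite mem_hooked_pairs_add_col // HR pry_setU1 setU11 /strip2 /= prx_setU1.
  have x1m : x1 < m by move: X1; rewrite !inE => /andP[].
  rewrite !strip_setU1 ?eqxx ?orbT //= in_setU1 (negbTE (top_notin_prx b1)) orbF.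
  by rewrite eq_sym -val_eqE /= ltn_eqF.
rewrite card_in_imset ?cardsX ?(card_below_prx leq_top q1) ?(card_below_prx leq_top q2) //.
move=> [x1 x2] [y1 y2] _ _ [/setU1_inj e1 /setU1_inj e2].
by case: (e1 (top_col_notin x1 b1)) (e2 (top_col_notin x2 b2)) => -> [->].
Qed.

Lemma hooked_pairs_off_top k i :
  (hooked_pairs m.+1 k i :\: top_row_pairs) :\: top_col_pairs =
  if k is k'.+1 then hooked_pairs m k' i else set0.
Proof.
apply/setP => -[Q1 Q2]; rewrite !in_setD mem_top_row_pairs mem_top_col_pairs /=.
case: k => [|k].
  rewrite in_set0; apply/negP => /and3P[my mx]; rewrite inE /= => /and5P[q1 _ _ _ _].
  case/and4P: q1 => p1 /eqP c1 _ b1; rewrite addn0 in c1.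
  by have := boxed_card_leq leq_top p1 (boxed_shrink b1 mx my); rewrite c1 ltnn.
apply/idP/idP.
  case/and3P => my mx HQ; have := HQ; rewrite !inE /= => /and5P[q1 q2 em ci ey].
  have mx2 : m \notin prx Q2 by rewrite (hooked_pairs_prx_top HQ).
  have my2 : m \notin pry Q2 by rewrite -(eqP ey).
  by rewrite -(quasi_perm_S _ mx my) -(quasi_perm_S _ mx2 my2) q1 q2 em ci ey.
rewrite inE /= => /and5P[q1 q2 em ci ey].
have [b1 b2] := (quasi_perm_boxed q1, quasi_perm_boxed q2).
rewrite top_notin_prx ?top_notin_pry // inE /=.
by rewrite !quasi_perm_S ?top_notin_prx ?top_notin_pry // q1 q2 em ci ey.
Qed.

Lemma card_hooked_pairs_S k i :
  #|hooked_pairs m.+1 k i| =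
  (if i is i'.+1 then k * #|hooked_pairs m k i'| else 0) + k * k * #|hooked_pairs m k i|
  + (if k is k'.+1 then #|hooked_pairs m k' i| else 0).
Proof.
rewrite -(cardsID top_row_pairs) card_hooked_pairs_row.
rewrite -(cardsID top_col_pairs (hooked_pairs m.+1 k i :\: top_row_pairs)).
rewrite card_hooked_pairs_col hooked_pairs_off_top addnA.
by case: k => [|k]; rewrite ?cards0.
Qed.

End TopElement.

Lemma boxed0 N (Q : {set 'I_N * 'I_N}) : boxed 0 Q -> Q = set0.
Proof. by move=> bQ; apply/setP => a; rewrite in_set0; apply/negP => /(boxedP bQ). Qed.

Lemma quasi_perm0 N k : quasi_perm 0 k (set0 : {set 'I_N * 'I_N}) = (k == 0).
Proof.
have p0 : partial_perm (set0 : {set 'I_N * 'I_N}) by apply/existsP; exists 1%g; apply: sub0set.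
have h0 : hooked (set0 : {set 'I_N * 'I_N}).
  by rewrite /hooked -subset0; apply/subsetP => x /setIP[/imsetP[a]]; rewrite inE in_set0.
have b0 : boxed 0 (set0 : {set 'I_N * 'I_N}) by apply/forallP => a; rewrite in_set0.
by rewrite /quasi_perm p0 h0 b0 cards0 add0n eq_sym !andbT.
Qed.

Lemma card_hooked_pairs0 N k i : #|@hooked_pairs N 0 k i| = (k == 0) && (i == 0).
Proof.
have sub : @hooked_pairs N 0 k i \subset [set (set0, set0)].
  apply/subsetP => -[Q1 Q2]; rewrite in_set1 inE /= => /and5P[q1 q2 _ _ _].
  by rewrite (boxed0 (quasi_perm_boxed q1)) (boxed0 (quasi_perm_boxed q2)).
have mem : ((set0, set0) \in @hooked_pairs N 0 k i) = (k == 0) && (i == 0).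
  rewrite inE /= quasi_perm0 eqxx.
  have -> : Qminus (set0 : {set 'I_N * 'I_N}) = set0 by apply/setP => a; rewrite !inE.
  by rewrite cards0 eqxx [0 == i]eq_sym andbT; case: (k == 0).
move: sub; rewrite subset1 -mem => /orP[] /eqP ->; rewrite ?cards1 ?set11 ?cards0 ?in_set0 //.
Qed.

Lemma JS_gt n k : n < k -> JS n k = 0%R.
Proof. by case: n => [|n] /= h; [case: k h | rewrite h orbT]. Qed.

Lemma JS_S n k :
  JS n.+1 k = (if k is k'.+1 then JS n k' + (k%:R * (k%:R%:P + 'X)) * JS n k else 0)%R.
Proof.
case: k => [|k] //=; case: ifP => // h.
by rewrite !JS_gt ?mulr0 ?addr0 // ltnW.
Qed.

Lemma coef_JS_step (p : {poly int}) k i :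
  (((k%:R * (k%:R%:P + 'X)) * p)`_i =
   (k * k)%:R * p`_i + k%:R * (if i is i'.+1 then p`_i' else 0))%R.
Proof.
rewrite -mulrA mulr_natl coefMn mulrDl coefD coefCM coefXM.
by case: i => [|i] /=; rewrite -mulr_natl natrM; ring.
Qed.

Local Open Scope ring_scope.

Lemma coef_JS N n k i : (n <= N)%N -> (JS n k)`_i = (#|@hooked_pairs N n k i|)%:Z.
Proof.
elim: n k i => [|n IH] k i le.
  by rewrite card_hooked_pairs0; case: k => [|k] /=; rewrite ?coef1 ?coef0; case: i.
have {}IH k i := IH k i (ltnW le).
rewrite JS_S (card_hooked_pairs_S (Ordinal le)).
by case: k => [|k]; case: i => [|i]; rewrite ?coef0 ?coefD ?coef_JS_step ?IH /=; lia.
Qed.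


Theorem theorem8 (n k i : nat) :
  (0 < k)%N -> (k <= n)%N -> (1 <= i)%N -> (i <= n - k)%N ->
  (JS n k)`_i =
  (#|[set PQ : {set 'I_n * 'I_n} * {set 'I_n * 'I_n} |
       [&& simply_hooked k PQ.1, simply_hooked k PQ.2,
           Qminus PQ.1 == Qminus PQ.2,
           #|Qminus PQ.1| == i, #|Qminus PQ.2| == i &
           pry PQ.1 == pry PQ.2]]|)%:Z.
Proof.
move=> _ kn _ _; rewrite (coef_JS k i (leqnn n)); congr (Posz _).
apply: eq_card => PQ; rewrite !inE !quasi_perm_simply_hooked //.
by case: eqP => [->|_]; rewrite ?andbF //; case: (_ == i); rewrite ?andbF.
Qed.
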